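(* Let $G$ be a graph and $k\ge\Delta(G)$. If every block of $G$ is strongly $k$-edge-orientable, then $G$ is strongly $k$-edge-orientable.
   Context: All graphs are simple. A block is a maximal $2$-connected subgraph. An orientation of a graph $H$ is any digraph obtained by replacing each edge $uv$ with the arc $(u,v)$, with the arc $(v,u)$, or with both arcs. A kernel of a digraph $D$ is an independent set $S$ such that every vertex of $D-S$ has an out-neighbor in $S$. $D$ is kernel-perfect if every induced subdigraph of $D$ has a kernel. For $f:V(H)\to\mathbb{N}$, an orientation $D$ of $H$ is $f$-kernel-perfect if it is kernel-perfect and $f(v)\ge 1+d^+_D(v)$ for all $v$. For $f:E(G)\to\mathbb{N}$, $G$ is $f$-edge-orientable if its line graph $L(G)$ admits an $f$-kernel-perfect orientation. For $v\in V(G)$, define $f_{k,v}:E(G)\to\mathbb{N}$ by $f_{k,v}(e)=d_G(v)$ if $e$ is incident to $v$, and $f_{k,v}(e)=k$ otherwise. $G$ is strongly $k$-edge-orientable if $G$ is $f_{k,v}$-edge-orientable for every $v\in V(G)$. *)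

(* A simple graph is a symmetric irreflexive relation
   e : rel T on a finite type T.  We work with induced subgraphs G[V]
   for V : {set T}; the whole graph is G[setT]. *)
From mathcomp Require Import all_boot.
Set Implicit Arguments. Unset Strict Implicit. Unset Printing Implicit Defensive.

Section Graphs.
Variable T : finType.

Definition simple_graph (e : rel T) : Prop :=
  symmetric e /\ irreflexive e.

Definition deg (V : {set T}) (e : rel T) (v : T) : nat :=
  #|[set y in V | e v y]|.

Definition edges (V : {set T}) (e : rel T) : {set {set T}} :=
  [set A : {set T} | [exists x in V, exists y in V, e x y && (A == [set x; y])]].

(* adjacency in the line graph: distinct edges sharing an endpoint *)
Definition ladj (A B : {set T}) : bool := (A != B) && (A :&: B != set0).

Definition line_orientation (V : {set T}) (e : rel T) (a : rel {set T}) : Prop :=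
  (forall A B, a A B -> [&& A \in edges V e, B \in edges V e & ladj A B]) /\
  (forall A B, A \in edges V e -> B \in edges V e -> ladj A B -> a A B || a B A).

Definition is_kernel (a : rel {set T}) (W S : {set {set T}}) : Prop :=
  S \subset W /\
  (forall A B, A \in S -> B \in S -> ~~ a A B) /\
  (forall A, A \in W :\: S -> exists2 B, B \in S & a A B).

Definition kernel_perfect (V : {set T}) (e : rel T) (a : rel {set T}) : Prop :=
  forall W : {set {set T}}, W \subset edges V e ->
    exists S : {set {set T}}, is_kernel a W S.

Definition outdeg (V : {set T}) (e : rel T) (a : rel {set T}) (A : {set T}) : nat :=
  #|[set B in edges V e | a A B]|.

Definition f_kernel_perfect (V : {set T}) (e : rel T) (f : {set T} -> nat)
    (a : rel {set T}) : Prop :=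
  line_orientation V e a /\ kernel_perfect V e a /\
  (forall A, A \in edges V e -> 1 + outdeg V e a A <= f A).

Definition f_edge_orientable (V : {set T}) (e : rel T) (f : {set T} -> nat) : Prop :=
  exists a : rel {set T}, f_kernel_perfect V e f a.

Definition fkv (V : {set T}) (e : rel T) (k : nat) (v : T) (A : {set T}) : nat :=
  if v \in A then deg V e v else k.

Definition strongly_edge_orientable (V : {set T}) (e : rel T) (k : nat) : Prop :=
  forall v, v \in V -> f_edge_orientable V e (fkv V e k v).

(* connectivity of G[S] (vacuous for S empty) *)
Definition connected_in (e : rel T) (S : {set T}) : bool :=
  [forall x in S, forall y in S,
     connect [rel u w | [&& u \in S, w \in S & e u w]] x y].

Definition nonsep (e : rel T) (S : {set T}) : bool :=
  [&& S != set0, connected_in e S & [forall x in S, connected_in e (S :\ x)]].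

(* B is (the vertex set of) a block: a maximal connected subgraph without
   a cut vertex; blocks are induced subgraphs G[B]. *)
Definition is_block (e : rel T) (B : {set T}) : Prop :=
  nonsep e B /\ (forall B' : {set T}, B \subset B' -> nonsep e B' -> B' = B).

End Graphs.

From mathcomp Require Import all_boot.
Set Implicit Arguments. Unset Strict Implicit. Unset Printing Implicit Defensive.

(* Induct on the number of vertices.  A graph that is not a block splits at a
   vertex c (a cut vertex, or any vertex if the graph is disconnected) into
   induced subgraphs G1 and G2 sharing at most c, and every block of G1 or G2
   is a block of G, so both are strongly k-edge-orientable by induction.  For
   v in G1, combine an f_{k,v}-kernel-perfect orientation of L(G1) with an
   f_{k,c}-kernel-perfect orientation of L(G2), adding an arc from every edge
   of G2 at c to every edge of G1 at c (and back when v = c).  An edge of G2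
   at c gains d_{G1}(c) out-arcs, which fits because f_{k,c} only allowed it
   d_{G2}(c) and d_{G1}(c) + d_{G2}(c) <= d_G(c) <= k.  A kernel of an induced
   subdigraph is a kernel S1 of its part in L(G1) together with a kernel of
   its part in L(G2), from which the edges at c are first removed when S1
   contains an edge at c. *)
Section BlockGluing.
Variables (T : finType) (e : rel T).
Hypotheses (esym : symmetric e) (eirr : irreflexive e).

(* Unlike [inE], this does not also unfold membership in [edges V e]. *)
Lemma in_setId (X : {set {set T}}) (P : pred {set T}) A :
  (A \in [set B in X | P B]) = (A \in X) && P A.
Proof. by rewrite inE. Qed.

Lemma edgesP (V A : {set T}) :
  reflect (exists x y, [/\ x \in V, y \in V, e x y & A = [set x; y]]) (A \in edges V e).
Proof.
rewrite inE; apply: (iffP exists_inP) => [[x xV /exists_inP [y yV /andP [exy /eqP ->]]]|].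
  by exists x, y.
move=> [x [y [xV yV exy ->]]]; exists x => //; apply/exists_inP; exists y => //.
by rewrite exy eqxx.
Qed.

Lemma edges_sub (V A : {set T}) : A \in edges V e -> A \subset V.
Proof.
by case/edgesP=> x [y [xV yV _ ->]]; apply/subsetP => z /set2P [] ->.
Qed.

Lemma edgesS (V1 V : {set T}) : V1 \subset V -> edges V1 e \subset edges V e.
Proof.
move=> sV1; apply/subsetP => A /edgesP [x [y [xV yV exy ->]]].
by apply/edgesP; exists x, y; rewrite !(subsetP sV1).
Qed.

Lemma edge_not_sub1 (V A : {set T}) c : A \in edges V e -> ~~ (A \subset [set c]).
Proof.
case/edgesP=> x [y [_ _ exy ->]]; rewrite subUset !sub1set !inE.
by apply: contraTN exy => /andP [/eqP -> /eqP ->]; rewrite eirr.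
Qed.

Lemma edges_sub1 (V : {set T}) c : V \subset [set c] -> edges V e = set0.
Proof.
move=> sV; apply/setP => A; rewrite in_set0; apply/negP => AE.
by case/negP: (edge_not_sub1 c AE); exact: subset_trans (edges_sub AE) sV.
Qed.

Lemma ladjC (A B : {set T}) : ladj A B = ladj B A.
Proof. by rewrite /ladj eq_sym setIC. Qed.

Lemma degS (V1 V : {set T}) u : V1 \subset V -> deg V1 e u <= deg V e u.
Proof.
move=> sV1; apply/subset_leq_card/subsetP => y; rewrite !inE => /andP [yV1 ->].
by rewrite (subsetP sV1).
Qed.

Lemma card_edges_at (W : {set T}) c : #|[set B in edges W e | c \in B]| <= deg W e c.
Proof.
apply: leq_trans (leq_imset_card (fun y => [set c; y]) [set y in W | e c y]).
apply/subset_leq_card/subsetP => B; rewrite inE => /andP [/edgesP [x [y [xW yW exy ->]]]].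
case/set2P => ->; apply/imsetP.
  by exists y; rewrite // inE yW exy.
by exists x; rewrite 1?setUC // inE xW esym.
Qed.

Lemma leq_add_deg (V V1 V2 : {set T}) c : V1 \subset V -> V2 \subset V ->
  V1 :&: V2 \subset [set c] -> deg V1 e c + deg V2 e c <= deg V e c.
Proof.
move=> sV1 sV2 sV12; rewrite /deg -cardsUI.
have -> : [set y in V1 | e c y] :&: [set y in V2 | e c y] = set0.
  apply/setP => y; rewrite !inE; apply/negP => /andP [/andP [y1 ecy] /andP [y2 _]].
  have /set1P yc : y \in [set c] by apply: (subsetP sV12); rewrite inE y1.
  by rewrite yc eirr in ecy.
rewrite cards0 addn0; apply/subset_leq_card/subsetP => y; rewrite !inE.
by case/orP => /andP [yVi ->]; rewrite andbT; [apply: (subsetP sV1) | apply: (subsetP sV2)].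
Qed.

Lemma fkvS (V1 V : {set T}) k v A : V1 \subset V -> fkv V1 e k v A <= fkv V e k v A.
Proof. by move=> sV1; rewrite /fkv; case: ifP => // _; exact: degS. Qed.

Lemma f_kernel_perfect_le (V : {set T}) f g a :
  (forall A, A \in edges V e -> f A <= g A) ->
  f_kernel_perfect V e f a -> f_kernel_perfect V e g a.
Proof.
by move=> fg [lo [kp od]]; split; [|split] => // A AE; apply: leq_trans (od A AE) (fg A AE).
Qed.

Lemma f_edge_orientable_edgeless (V : {set T}) f :
  edges V e = set0 -> f_edge_orientable V e f.
Proof.
move=> E0; exists [rel A B | false]; split; [|split] => [|W|A]; rewrite ?E0 ?inE //.
  by split=> // A B; rewrite E0 inE.
rewrite subset0 => /eqP ->; exists set0; split; [exact: sub0set | split=> //].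
by move=> A; rewrite !inE.
Qed.

Lemma f_edge_orientable_fkv (W : {set T}) k c : (forall u, deg W e u <= k) ->
  strongly_edge_orientable W e k -> f_edge_orientable W e (fkv W e k c).
Proof.
move=> degk seoW; have [cW | cNW] := boolP (c \in W); first exact: seoW.
have [E0 | [A AE]] := set_0Vmem (edges W e); first exact: f_edge_orientable_edgeless.
have /set0Pn [x xA] : A != set0.
  by apply: contraNneq (edge_not_sub1 c AE) => ->; exact: sub0set.
have [a ha] := seoW x (subsetP (edges_sub AE) x xA).
exists a; apply: f_kernel_perfect_le ha => B BE; rewrite /fkv.
have /negPf -> : c \notin B by apply: contra cNW; apply/subsetP/edges_sub.
by case: ifP.
Qed.

Definition separation (V V1 V2 : {set T}) (c : T) : Prop :=
  [/\ V1 :|: V2 = V, V1 :&: V2 \subset [set c] &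
      forall x y, x \in V -> y \in V -> e x y ->
        (x \in V1) && (y \in V1) || (x \in V2) && (y \in V2)].

Section Separation.
Variables (V V1 V2 : {set T}) (c : T).
Hypothesis sepV : separation V V1 V2 c.

Lemma separation_sym : separation V V2 V1 c.
Proof.
case: sepV => U12 I12 cross; split; rewrite 1?setUC 1?setIC // => x y xV yV exy.
by rewrite orbC cross.
Qed.

Lemma separation_subl : V1 \subset V.
Proof. by case: sepV => <- _ _; exact: subsetUl. Qed.

Lemma separation_subr : V2 \subset V.
Proof. by case: sepV => <- _ _; exact: subsetUr. Qed.

Lemma separation_cap x : x \in V1 -> x \in V2 -> x = c.
Proof. by case: sepV => _ I12 _ x1 x2; apply/set1P/(subsetP I12); rewrite inE x1. Qed.

Lemma separation_closed u w : u \in V1 -> u != c -> w \in V -> e u w -> w \in V1.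
Proof.
move=> u1 uc wV euw; have uV := subsetP separation_subl u u1.
case: sepV => _ _ /(_ u w uV wV euw) /orP [/andP [] | /andP [u2 _]] //.
by rewrite (separation_cap u1 u2) eqxx in uc.
Qed.

Lemma separation_edges A : A \in edges V e -> (A \in edges V1 e) || (A \in edges V2 e).
Proof.
case/edgesP => x [y [xV yV exy ->]]; case: sepV => _ _ /(_ x y xV yV exy).
by case/orP => /andP [xi yi]; apply/orP; [left | right]; apply/edgesP; exists x, y.
Qed.

Lemma separation_edges_disjoint A : A \in edges V1 e -> A \in edges V2 e -> False.
Proof.
move=> A1 A2; case/negP: (edge_not_sub1 c A1); case: sepV => _ I12 _.
by apply: subset_trans I12; rewrite subsetI !(edges_sub A1, edges_sub A2).
Qed.

Lemma separation_ladj A B : A \in edges V1 e -> B \in edges V2 e ->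
  ladj A B = (c \in A) && (c \in B).
Proof.
move=> A1 B2; apply/andP/andP => [[_ /set0Pn [z /setIP [zA zB]]] | [cA cB]].
  have z1 := subsetP (edges_sub A1) z zA; have z2 := subsetP (edges_sub B2) z zB.
  by rewrite -(separation_cap z1 z2).
split; last by apply/set0Pn; exists c; rewrite inE cA.
by apply: contraTneq B2 => <-; apply/negP => A2; apply: separation_edges_disjoint A1 A2.
Qed.

Lemma card_edges_separation (P : pred {set T}) :
  #|[set A in edges V e | P A]| <=
    #|[set A in edges V1 e | P A]| + #|[set A in edges V2 e | P A]|.
Proof.
rewrite -cardsUI; apply: leq_trans (leq_addr _ _); apply/subset_leq_card/subsetP => A.
rewrite in_setU !in_setId => /andP [/separation_edges /orP [] -> ->] //.
by rewrite orbT.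
Qed.

End Separation.

Section Glue.
Variables (k : nat) (V V1 V2 : {set T}) (c v : T) (a1 a2 : rel {set T}).
Hypotheses (sepV : separation V V1 V2 c) (degc : deg V e c <= k) (vV1 : v \in V1)
  (h1 : f_kernel_perfect V1 e (fkv V1 e k v) a1)
  (h2 : f_kernel_perfect V2 e (fkv V2 e k c) a2).

Let E1 := edges V1 e.
Let E2 := edges V2 e.
Let disjE12 := separation_edges_disjoint sepV.

Definition glue_orientation : rel {set T} := [rel A B | [|| a1 A B, a2 A B |
  [&& c \in A, c \in B & (A \in E2) && (B \in E1) || [&& c == v, A \in E1 & B \in E2]]]].

Local Notation ga := glue_orientation.

Lemma a1_ladj A B : a1 A B -> [&& A \in E1, B \in E1 & ladj A B].
Proof. by case: h1 => [[lo _] _] /lo. Qed.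

Lemma a2_ladj A B : a2 A B -> [&& A \in E2, B \in E2 & ladj A B].
Proof. by case: h2 => [[lo _] _] /lo. Qed.

Lemma glue_orientation11 A B : A \in E1 -> B \in E1 -> ga A B = a1 A B.
Proof.
move=> A1 B1; rewrite /glue_orientation /=.
have /negPf -> : ~~ a2 A B by apply/negP => /a2_ladj /and3P [A2 _ _]; exact: disjE12 A1 A2.
have /negPf -> : A \notin E2 by apply/negP; exact: disjE12 A1.
have /negPf -> : B \notin E2 by apply/negP; exact: disjE12 B1.
by rewrite !andbF ?orbF.
Qed.

Lemma glue_orientation22 A B : A \in E2 -> B \in E2 -> ga A B = a2 A B.
Proof.
move=> A2 B2; rewrite /glue_orientation /=.
have /negPf -> : ~~ a1 A B by apply/negP => /a1_ladj /and3P [A1 _ _]; exact: disjE12 A1 A2.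
have /negPf -> : A \notin E1 by apply/negP => A1; exact: disjE12 A1 A2.
have /negPf -> : B \notin E1 by apply/negP => B1; exact: disjE12 B1 B2.
by rewrite /= !andbF orbF.
Qed.

Lemma glue_orientation12 A B : A \in E1 -> B \in E2 -> ga A B = [&& c \in A, c \in B & c == v].
Proof.
move=> A1 B2; rewrite /glue_orientation /= A1 B2.
have /negPf -> : ~~ a1 A B by apply/negP => /a1_ladj /and3P [_ B1 _]; exact: disjE12 B1 B2.
have /negPf -> : ~~ a2 A B by apply/negP => /a2_ladj /and3P [A2 _ _]; exact: disjE12 A1 A2.
have /negPf -> : A \notin E2 by apply/negP; exact: disjE12 A1.
by rewrite /= !andbT.
Qed.

Lemma glue_orientation21 A B : A \in E2 -> B \in E1 -> ga A B = (c \in A) && (c \in B).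
Proof.
move=> A2 B1; rewrite /glue_orientation /= A2 B1.
have /negPf -> : ~~ a1 A B by apply/negP => /a1_ladj /and3P [A1 _ _]; exact: disjE12 A1 A2.
have /negPf -> : ~~ a2 A B by apply/negP => /a2_ladj /and3P [_ B2 _]; exact: disjE12 B1 B2.
have /negPf -> : A \notin E1 by apply/negP => A1; exact: disjE12 A1 A2.
by rewrite /= andbT.
Qed.

Lemma glue_line_orientation : line_orientation V e ga.
Proof.
have [s1 s2] := (separation_subl sepV, separation_subr sepV).
split=> [A B | A B AE BE lAB].
  case/or3P => [/a1_ladj | /a2_ladj | /and3P [cA cB /orP [/andP [A2 B1] | /and3P [_ A1 B2]]]].
  - by case/and3P => A1 B1 ->; rewrite !(subsetP (edgesS s1)).
  - by case/and3P => A2 B2 ->; rewrite !(subsetP (edgesS s2)).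
  - by rewrite (subsetP (edgesS s2) A) // (subsetP (edgesS s1) B) // ladjC
      (separation_ladj sepV) // cA cB.
  - by rewrite (subsetP (edgesS s1) A) // (subsetP (edgesS s2) B) //
      (separation_ladj sepV) // cA cB.
case/orP: (separation_edges sepV AE) => [A1|A2];
  case/orP: (separation_edges sepV BE) => [B1|B2].
- by have [[_ co1] _] := h1; rewrite !glue_orientation11 // co1.
- move: lAB; rewrite (separation_ladj sepV) // => /andP [cA cB].
  by rewrite (glue_orientation21 B2 A1) cA cB orbT.
- move: lAB; rewrite ladjC (separation_ladj sepV) // => /andP [cB cA].
  by rewrite (glue_orientation21 A2 B1) cA cB.
- by have [[_ co2] _] := h2; rewrite !glue_orientation22 // co2.
Qed.

Lemma glue_outdeg1 A : A \in E1 ->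
  outdeg V e ga A <= outdeg V1 e a1 A + ((c == v) && (c \in A)) * deg V2 e c.
Proof.
move=> A1; apply: leq_trans (card_edges_separation sepV (ga A)) _; apply: leq_add.
  apply/subset_leq_card/subsetP => B; rewrite !in_setId => /andP [B1].
  by rewrite glue_orientation11 // B1.
case: ((c == v) && (c \in A)) / andP => [[/eqP cv cA] | cvA].
  rewrite mul1n; apply: leq_trans (card_edges_at V2 c); apply/subset_leq_card/subsetP => B.
  by rewrite !in_setId => /andP [B2]; rewrite glue_orientation12 // B2 => /and3P [].
rewrite mul0n leqn0 cards_eq0; apply/eqP/setP => B; rewrite in_setId in_set0.
apply/negP => /andP [B2]; rewrite glue_orientation12 // => /and3P [cA _ cv].
by apply: cvA; split.
Qed.

Lemma glue_outdeg2 A : A \in E2 ->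
  outdeg V e ga A <= outdeg V2 e a2 A + (c \in A) * deg V1 e c.
Proof.
move=> A2; apply: leq_trans (card_edges_separation sepV (ga A)) _.
rewrite [X in _ <= X]addnC; apply: leq_add.
  case cA: (c \in A).
    rewrite mul1n; apply: leq_trans (card_edges_at V1 c).
    apply/subset_leq_card/subsetP => B; rewrite !in_setId => /andP [B1].
    by rewrite glue_orientation21 // B1 cA.
  rewrite mul0n leqn0 cards_eq0; apply/eqP/setP => B; rewrite in_setId in_set0.
  by apply/negP => /andP [B1]; rewrite glue_orientation21 // cA.
apply/subset_leq_card/subsetP => B; rewrite !in_setId => /andP [B2].
by rewrite glue_orientation22 // B2.
Qed.

Lemma glue_outdeg A : A \in edges V e -> 1 + outdeg V e ga A <= fkv V e k v A.
Proof.
have [s1 s2] := (separation_subl sepV, separation_subr sepV).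
case: sepV => _ I12 _ AE; case/orP: (separation_edges sepV AE) => [A1 | A2].
  have [_ [_ /(_ A A1) od1]] := h1.
  apply: leq_trans (leq_add (leqnn 1) (glue_outdeg1 A1)) _; rewrite addnA.
  case: ((c == v) && (c \in A)) / andP => [[/eqP cv cA] | _].
    apply: leq_trans (leq_add od1 (leqnn _)) _.
    by rewrite /fkv -cv cA mul1n leq_add_deg.
  by rewrite mul0n addn0; apply: leq_trans od1 (fkvS _ _ _ s1).
have [_ [_ /(_ A A2) od2]] := h2.
apply: leq_trans (leq_add (leqnn 1) (glue_outdeg2 A2)) _; rewrite addnA.
apply: leq_trans (leq_add od2 (leqnn _)) _.
have fkvV : (if c \in A then deg V e c else k) <= fkv V e k v A.
  rewrite /fkv; have [vA | _] := boolP (v \in A); last by case: ifP.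
  have vc := separation_cap sepV vV1 (subsetP (edges_sub A2) v vA).
  by rewrite -vc vA.
apply: leq_trans fkvV; rewrite /fkv; case: (c \in A).
  by rewrite mul1n addnC leq_add_deg.
by rewrite mul0n addn0.
Qed.

Lemma glue_kernel_perfect : kernel_perfect V e ga.
Proof.
move=> W sW; have [[_ [kp1 _]] [_ [kp2 _]]] := (h1, h2).
have [S1 [S1W [S1i S1a]]] := kp1 (W :&: E1) (subsetIr _ _).
pose cS1 := [exists B in S1, c \in B].
pose W2 := [set B in W :&: E2 | ~~ (cS1 && (c \in B))].
have [W2W sW2] : W2 \subset W /\ W2 \subset E2.
  by split; apply/subsetP => B; rewrite in_setId in_setI => /andP [/andP []].
have [S2 [S2W [S2i S2a]]] := kp2 W2 sW2.
have S1E1 : S1 \subset E1 := subset_trans S1W (subsetIr _ _).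
have S2E2 : S2 \subset E2 := subset_trans S2W sW2.
have in_S1 B : B \in S1 :|: S2 -> B \in E1 -> B \in S1.
  by case/setUP => // /(subsetP S2E2) B2 B1; case: (disjE12 B1 B2).
have in_S2 B : B \in S1 :|: S2 -> B \in E2 -> B \in S2.
  by case/setUP => // /(subsetP S1E1) B1 B2; case: (disjE12 B1 B2).
have S2_avoid_c B A : B \in S1 -> c \in B -> A \in S2 -> c \notin A.
  move=> BS1 cB /(subsetP S2W); rewrite in_setId => /andP [_]; apply: contraNN => cA.
  by rewrite cA andbT; apply/exists_inP; exists B.
have SW : S1 :|: S2 \subset W.
  by rewrite subUset (subset_trans S1W (subsetIl _ _)) (subset_trans S2W W2W).
have edgesS12 B : B \in S1 :|: S2 -> B \in edges V e by move/(subsetP SW)/(subsetP sW).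
exists (S1 :|: S2); split; [exact: SW | split].
- move=> A B AS BS; case/orP: (separation_edges sepV (edgesS12 A AS)) => [A1|A2];
    case/orP: (separation_edges sepV (edgesS12 B BS)) => [B1|B2].
  + by rewrite glue_orientation11 // S1i ?in_S1.
  + rewrite glue_orientation12 //; apply/negP => /and3P [cA cB _].
    by case/negP: (S2_avoid_c A B (in_S1 A AS A1) cA (in_S2 B BS B2)).
  + rewrite glue_orientation21 //; apply/negP => /andP [cA cB].
    by case/negP: (S2_avoid_c B A (in_S1 B BS B1) cB (in_S2 A AS A2)).
  + by rewrite glue_orientation22 // S2i ?in_S2.
- move=> A; rewrite in_setD in_setU negb_or => /andP [/andP [AS1 AS2] AW].
  case/orP: (separation_edges sepV (subsetP sW A AW)) => [A1|A2].
    have [|B BS1 ab] := S1a A; first by rewrite in_setD AS1 in_setI AW.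
    by exists B; rewrite ?inE ?BS1 // glue_orientation11 // (subsetP S1E1).
  have [/andP [/exists_inP [B BS1 cB] cA] | AcS1] := boolP (cS1 && (c \in A)).
    by exists B; rewrite ?inE ?BS1 // glue_orientation21 ?cA ?cB // (subsetP S1E1).
  have [|B BS2 ab] := S2a A; first by rewrite in_setD AS2 in_setId in_setI AW A2.
  by exists B; rewrite ?inE ?BS2 ?orbT // glue_orientation22 // (subsetP S2E2).
Qed.

Lemma f_edge_orientable_glue : f_edge_orientable V e (fkv V e k v).
Proof.
exists ga; split; [exact: glue_line_orientation | split].
  exact: glue_kernel_perfect.
exact: glue_outdeg.
Qed.

End Glue.

Lemma seo_separation k (V V1 V2 : {set T}) c :
  (forall u, deg V e u <= k) -> separation V V1 V2 c ->
  strongly_edge_orientable V1 e k -> strongly_edge_orientable V2 e k ->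
  strongly_edge_orientable V e k.
Proof.
move=> degk sepV seo1 seo2 v vV.
have degW (W : {set T}) : W \subset V -> forall u, deg W e u <= k.
  by move=> sWV u; apply: leq_trans (degS u sWV) (degk u).
have /setUP [v1 | v2] : v \in V1 :|: V2 by case: sepV => -> _ _.
  have [a1 h1] := seo1 v v1.
  have [a2 h2] := f_edge_orientable_fkv c (degW _ (separation_subr sepV)) seo2.
  exact: f_edge_orientable_glue sepV (degk c) v1 h1 h2.
have [a2 h2] := seo2 v v2.
have [a1 h1] := f_edge_orientable_fkv c (degW _ (separation_subl sepV)) seo1.
exact: f_edge_orientable_glue (separation_sym sepV) (degk c) v2 h2 h1.
Qed.

Definition induced (S : {set T}) : rel T := [rel u w | [&& u \in S, w \in S & e u w]].

Lemma induced_sym S : symmetric (induced S).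
Proof. by move=> u w; rewrite /induced /= andbCA esym. Qed.

Lemma connected_inP S x y : connected_in e S -> x \in S -> y \in S -> connect (induced S) x y.
Proof. by move=> /forall_inP conS xS yS; move/forall_inP: (conS x xS); apply. Qed.

Lemma connected_in_sub (S X : {set T}) x : connected_in e S -> x \in S -> x \in X ->
  (forall u w, u \in S -> w \in S -> e u w -> u \in X -> w \in X) -> S \subset X.
Proof.
move=> conS xS xX clX; apply/subsetP => y yS.
have clSX : closed (induced S) X.
  apply: (intro_closed (sym_connect_sym (@induced_sym S))) => u w /and3P [uS wS euw].
  exact: clX.
by rewrite -(closed_connect clSX (connected_inP conS xS yS)).
Qed.

Lemma nonsep_connected_setD1 S x : nonsep e S -> connected_in e (S :\ x).
Proof.
case/and3P => _ conS /forall_inP conSD; have [xS | xNS] := boolP (x \in S).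
  exact: conSD.
by have /setDidPl -> : [disjoint S & [set x]] by rewrite disjoint_sym disjoints1.
Qed.

Definition block_in (V B : {set T}) : Prop :=
  [/\ B \subset V, nonsep e B &
      forall B' : {set T}, B \subset B' -> B' \subset V -> nonsep e B' -> B' = B].

Definition blocks_seo k (V : {set T}) : Prop :=
  forall B, block_in V B -> strongly_edge_orientable B e k.

Lemma block_in_separation (V V1 V2 B : {set T}) c b : separation V V1 V2 c ->
  block_in V1 B -> b \in B -> b != c -> block_in V B.
Proof.
move=> sepV [sB nB maxB] bB bc; split=> //; first exact: subset_trans sB (separation_subl sepV).
move=> B' BB' B'V nB'; apply: maxB => //.
have [bB' b1] := (subsetP BB' b bB, subsetP sB b bB).
have closed1 u w : u \in V1 -> u != c -> w \in B' -> e u w -> w \in V1.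
  by move=> u1 uc /(subsetP B'V) wV; exact: (separation_closed sepV u1 uc wV).
have sD1 : B' :\ c \subset V1.
  apply: connected_in_sub (nonsep_connected_setD1 c nB') _ b1 _; first by rewrite !inE bc.
  move=> u w; rewrite !inE => /andP [uc _] /andP [_ wB'] euw u1.
  exact: closed1 u w u1 uc wB' euw.
have conB' : connected_in e B' by case/and3P: nB'.
apply: connected_in_sub conB' bB' b1 _ => u w _ wB' euw u1.
have [uc | uNc] := eqVneq u c; last exact: closed1 u w u1 uNc wB' euw.
by apply: (subsetP sD1); rewrite !inE wB' andbT; apply: contraTneq euw => ->; rewrite uc eirr.
Qed.

Lemma blocks_seo_separation k (V V1 V2 : {set T}) c : separation V V1 V2 c ->
  blocks_seo k V -> blocks_seo k V1.
Proof.
move=> sepV hV B blockB.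
have [/exists_inP [b bB bc] | /exists_inPn Bc] := boolP [exists b in B, b != c].
  by apply: hV; apply: block_in_separation sepV blockB bB bc.
move=> v _; apply/f_edge_orientable_edgeless/(edges_sub1 (c := c)).
by apply/subsetP => b bB; rewrite inE; move: (Bc b bB); rewrite negbK.
Qed.

Definition component (S : {set T}) (y : T) : {set T} :=
  [set u in S | connect (induced S) y u].

Lemma component_closed S y u w :
  u \in component S y -> w \in S -> e u w -> w \in component S y.
Proof.
rewrite !inE => /andP [uS yu] wS euw; rewrite wS.
by apply: connect_trans yu (connect1 _); rewrite /induced /= uS wS.
Qed.

Lemma component_sub S y : component S y \subset S.
Proof. by rewrite /component setIdE subsetIl. Qed.

Lemma separation_component (V C : {set T}) x : x \in V -> C \subset V ->
  (forall u w, u \in C -> w \in V -> w != x -> e u w -> w \in C) ->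
  separation V (x |: C) (V :\: C) x.
Proof.
move=> xV CV Ccl; split.
- apply/setP => u; rewrite !inE; have [-> | _] := eqVneq u x; first by rewrite xV.
  by case uC: (u \in C) => //=; rewrite (subsetP CV).
- apply/subsetP => u; rewrite !inE.
  by case: (u \in C) => /=; rewrite ?andbF ?orbF // => /andP [].
move=> u w uV wV euw; rewrite !inE uV wV !andbT.
case uC: (u \in C); case wC: (w \in C); rewrite ?orbT //= !orbF ?andbT.
  by apply/negPn/negP => wx; move: (Ccl u w uC wV wx euw); rewrite wC.
by apply/negPn/negP => ux; move: (Ccl w u wC uV ux); rewrite esym uC => /(_ euw).
Qed.

Lemma exists_separation_component (V C : {set T}) x y z : x \in V -> C \subset V ->
  (forall u w, u \in C -> w \in V -> w != x -> e u w -> w \in C) ->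
  y \in C -> z \in V -> z \notin x |: C ->
  exists V1 V2 c, [/\ separation V V1 V2 c, #|V1| < #|V| & #|V2| < #|V|].
Proof.
move=> xV CV Ccl yC zV zNC; exists (x |: C), (V :\: C), x.
split; [exact: separation_component | |]; apply/proper_card/properP; split.
- by rewrite subUset sub1set xV.
- by exists z.
- exact: subsetDl.
- by exists y; rewrite ?inE ?yC ?(subsetP CV).
Qed.

Lemma exists_separation (V : {set T}) : V != set0 -> ~~ nonsep e V ->
  exists V1 V2 c, [/\ separation V V1 V2 c, #|V1| < #|V| & #|V2| < #|V|].
Proof.
rewrite /nonsep => -> /= /nandP [/forall_inPn [x xV /forall_inPn [y yV nxy]] |].
  apply: (exists_separation_component (x := x) (y := x) (z := y) xV (component_sub V x)).
  - by move=> u w uC wV _; apply: component_closed.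
  - by rewrite inE xV connect0.
  - by [].
  rewrite in_setU1 inE negb_or negb_and yV /=; apply/andP; split=> //.
  by apply: contraNneq nxy => ->; exact: connect0.
case/forall_inPn => x xV /forall_inPn [y yD /forall_inPn [z zD nyz]].
apply: (exists_separation_component (C := component (V :\ x) y) (y := y) (z := z) xV).
- exact: subset_trans (component_sub _ y) (subsetDl _ _).
- by move=> u w uC wV wx; apply: component_closed uC _; rewrite in_setD1 wx.
- by rewrite inE yD connect0.
- by move: zD; rewrite inE => /andP [].
by move: zD; rewrite in_setU1 !inE negb_or negb_and => /andP [-> ->].
Qed.

Lemma seo_blocks k : (forall u, deg [set: T] e u <= k) ->
  forall V : {set T}, blocks_seo k V -> strongly_edge_orientable V e k.
Proof.
move=> degk V; have [n] := ubnP #|V|; elim: n V => // n IHn V /ltnSE leVn hV.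
have [-> | V0] := eqVneq V set0; first by move=> v; rewrite inE.
have [nsepV | nnsepV] := boolP (nonsep e V).
  by apply: hV; split => // B' VB' B'V _; apply/eqP; rewrite eqEsubset B'V VB'.
have [V1 [V2 [c [sepV lt1 lt2]]]] := exists_separation V0 nnsepV.
apply: (seo_separation _ sepV) => [u | |].
- exact: leq_trans (degS u (subsetT V)) (degk u).
- exact: IHn (leq_trans lt1 leVn) (blocks_seo_separation sepV hV).
- exact: IHn (leq_trans lt2 leVn) (blocks_seo_separation (separation_sym sepV) hV).
Qed.

End BlockGluing.

Theorem mainTheorem12 (T : finType) (e : rel T) (k : nat) :
  simple_graph e ->
  (forall v : T, deg [set: T] e v <= k) ->
  (forall B : {set T}, is_block e B -> strongly_edge_orientable B e k) ->
  strongly_edge_orientable [set: T] e k.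
Proof.
move=> [esym eirr] degk blocks_seo_e; apply: (seo_blocks esym eirr degk).
move=> B [_ nB maxB]; apply: blocks_seo_e; split=> // B' BB' nB'.
exact: maxB BB' (subsetT B') nB'.
Qed.
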